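(* Let $\mathcal{X}=\{1,\dots,n\}$, let $\pi$ be a strictly positive probability distribution on $\mathcal{X}$, let $P$ be a $\pi$-reversible transition matrix, let $G$ be the Gibbs kernel induced by a partition $\mathcal{X}=\bigsqcup_{i=1}^k\mathcal{O}_i$, and for $\alpha\in[0,1]$ let $A_\alpha=\alpha P+(1-\alpha)G$. Then $$\|A_\alpha-\Pi\|_{F,\pi}^2=2\alpha(1-\alpha)\operatorname{Tr}(\overline{P})+\alpha^2\operatorname{Tr}(P^2)+(1-\alpha)^2k-1.$$
   Context: $\pi$-reversible means $\pi(x)P(x,y)=\pi(y)P(y,x)$ for all $x,y$. The Gibbs kernel is $G(x,y)=\pi(y)/\pi(\mathcal{O}(x))$ if $y\in\mathcal{O}(x)$ and $0$ otherwise, where $\mathcal{O}(x)$ is the block containing $x$ and $\pi(\mathcal{O})=\sum_{z\in\mathcal{O}}\pi(z)$. $\overline{P}$ is the $k\times k$ projection chain $\overline{P}(i,j)=\frac{1}{\pi(\mathcal{O}_i)}\sum_{x\in\mathcal{O}_i,\,y\in\mathcal{O}_j}\pi(x)P(x,y)$. $\Pi$ is the $n\times n$ matrix with every row equal to $\pi$. For $n\times n$ real matrices, $\|M\|_{F,\pi}^2=\operatorname{Tr}(M^*M)$, where $M^*$ is the adjoint of $M$ in $\ell^2(\pi)$, i.e. $M^*(x,y)=\pi(y)M(y,x)/\pi(x)$. *)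

From HB Require Import structures.
From mathcomp Require Import all_boot all_order all_algebra.
Set Implicit Arguments. Unset Strict Implicit. Unset Printing Implicit Defensive.
Import Order.TTheory GRing.Theory Num.Theory.
Local Open Scope ring_scope.

Section Defs.
Variables (R : realFieldType) (n k : nat).

Definition prob_pos (pi : 'I_n -> R) : Prop :=
  (forall x, 0 < pi x) /\ \sum_(x < n) pi x = 1.

Definition transition (P : 'M[R]_n) : Prop :=
  (forall x y, 0 <= P x y) /\ (forall x, \sum_(y < n) P x y = 1).

Definition reversible (pi : 'I_n -> R) (P : 'M[R]_n) : Prop :=
  forall x y, pi x * P x y = pi y * P y x.

(* a partition of 'I_n into k (nonempty) blocks O_i = blk^{-1}(i) *)
Definition partition_map (blk : 'I_n -> 'I_k) : Prop :=
  forall i : 'I_k, exists x : 'I_n, blk x = i.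

Definition piO (pi : 'I_n -> R) (blk : 'I_n -> 'I_k) (i : 'I_k) : R :=
  \sum_(z < n | blk z == i) pi z.

Definition gibbs (pi : 'I_n -> R) (blk : 'I_n -> 'I_k) : 'M[R]_n :=
  \matrix_(x, y) (if blk y == blk x then pi y / piO pi blk (blk x) else 0).

Definition proj_chain (pi : 'I_n -> R) (blk : 'I_n -> 'I_k) (P : 'M[R]_n)
  : 'M[R]_k :=
  \matrix_(i, j) ((piO pi blk i)^-1 *
     \sum_(x < n | blk x == i) \sum_(y < n | blk y == j) pi x * P x y).

Definition PiM (pi : 'I_n -> R) : 'M[R]_n := \matrix_(x, y) pi y.

Definition adjoint (pi : 'I_n -> R) (M : 'M[R]_n) : 'M[R]_n :=
  \matrix_(x, y) (pi y * M y x / pi x).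

Definition frob2 (pi : 'I_n -> R) (M : 'M[R]_n) : R :=
  \tr (adjoint pi M *m M).

End Defs.

(* A := alpha P + (1 - alpha) G is pi-reversible, so its adjoint is itself and
   the squared norm is Tr ((A - Pi)^2).  Since A has unit row sums and pi is
   stationary for it, (A - Pi)^2 = A^2 - Pi. *)

From HB Require Import structures.
From mathcomp Require Import all_boot all_order all_algebra.
From mathcomp Require Import ring.
Set Implicit Arguments. Unset Strict Implicit. Unset Printing Implicit Defensive.
Import Order.TTheory GRing.Theory Num.Theory.
Local Open Scope ring_scope.

Section Stationary.
Variables (R : realFieldType) (n : nat) (pi : 'I_n -> R).

Definition unit_row_sums (M : 'M[R]_n) : Prop := forall x, \sum_y M x y = 1.

Definition stationary (M : 'M[R]_n) : Prop :=
  forall y, \sum_x pi x * M x y = pi y.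

Lemma unit_row_sums_lincomb (a b : R) (A B : 'M[R]_n) :
  unit_row_sums A -> unit_row_sums B -> a + b = 1 ->
  unit_row_sums (a *: A + b *: B).
Proof.
move=> A1 B1 ab1 x; under eq_bigr do rewrite !mxE.
by rewrite big_split -!mulr_sumr A1 B1 !mulr1.
Qed.

Lemma reversible_lincomb (a b : R) (A B : 'M[R]_n) :
  reversible pi A -> reversible pi B -> reversible pi (a *: A + b *: B).
Proof.
move=> rA rB x y.
by rewrite !mxE !mulrDr ![pi _ * (_ * _)]mulrCA rA rB.
Qed.

Lemma reversible_PiM : reversible pi (PiM pi).
Proof. by move=> x y; rewrite !mxE mulrC. Qed.

Lemma reversibleB (A B : 'M[R]_n) :
  reversible pi A -> reversible pi B -> reversible pi (A - B).
Proof. by move=> rA rB x y; rewrite !mxE !mulrBr rA rB. Qed.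

Lemma reversible_stationary (M : 'M[R]_n) :
  reversible pi M -> unit_row_sums M -> stationary M.
Proof.
move=> rM M1 y; under eq_bigr do rewrite rM.
by rewrite -mulr_sumr M1 mulr1.
Qed.

Lemma mulmx_PiM (M : 'M[R]_n) : unit_row_sums M -> M *m PiM pi = PiM pi.
Proof.
move=> M1; apply/matrixP => x y; rewrite !mxE.
under eq_bigr do rewrite mxE.
by rewrite -mulr_suml M1 mul1r.
Qed.

Lemma PiM_mulmx (M : 'M[R]_n) : stationary M -> PiM pi *m M = PiM pi.
Proof.
move=> sM; apply/matrixP => x y; rewrite !mxE -(sM y).
by apply: eq_bigr => z _; rewrite mxE.
Qed.

Lemma unit_row_sums_PiM : \sum_x pi x = 1 -> unit_row_sums (PiM pi).
Proof. by move=> pi1 x; under eq_bigr do rewrite mxE. Qed.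

Lemma mxtrace_PiM : \tr (PiM pi) = \sum_x pi x.
Proof. by apply: eq_bigr => x _; rewrite mxE. Qed.

Lemma sqr_subr_PiM (M : 'M[R]_n) :
  \sum_x pi x = 1 -> unit_row_sums M -> stationary M ->
  (M - PiM pi) *m (M - PiM pi) = M *m M - PiM pi.
Proof.
move=> pi1 M1 sM.
rewrite mulmxBl !mulmxBr (mulmx_PiM M1) (PiM_mulmx sM).
by rewrite (mulmx_PiM (unit_row_sums_PiM pi1)) opprB addrA subrK.
Qed.

Lemma adjoint_reversible (M : 'M[R]_n) :
  (forall x, pi x != 0) -> reversible pi M -> adjoint pi M = M.
Proof.
move=> pi_neq0 rM; apply/matrixP => x y.
by rewrite mxE -rM mulrC mulKf.
Qed.

Lemma frob2_reversible (M : 'M[R]_n) :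
  (forall x, pi x != 0) -> reversible pi M -> frob2 pi M = \tr (M *m M).
Proof. by move=> pi_neq0 rM; rewrite /frob2 adjoint_reversible. Qed.

End Stationary.

Section Gibbs.
Variables (R : realFieldType) (n k : nat) (pi : 'I_n -> R) (blk : 'I_n -> 'I_k).
Hypothesis pi_gt0 : forall x, 0 < pi x.
Hypothesis blk_onto : partition_map blk.

Local Notation G := (gibbs pi blk).

Lemma piO_gt0 i : 0 < piO pi blk i.
Proof.
have [x <-] := blk_onto i.
rewrite /piO (bigD1 x) //= ltr_wpDr //.
by apply: sumr_ge0 => z _; apply/ltW.
Qed.

Lemma sum_block_div_piO i (c : R) :
  \sum_(z < n | blk z == i) pi z * (c / piO pi blk i) = c.
Proof.
by rewrite -mulr_suml mulrCA mulfV ?mulr1 // gt_eqF ?piO_gt0.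
Qed.

Lemma sum_gibbs_row x (F : 'I_n -> R) :
  \sum_y G x y * F y = \sum_(y < n | blk y == blk x) pi y * (F y / piO pi blk (blk x)).
Proof.
rewrite [RHS]big_mkcond; apply: eq_bigr => y _; rewrite mxE.
by case: ifP => _; [rewrite mulrAC -mulrA | rewrite mul0r].
Qed.

Lemma gibbs_reversible : reversible pi G.
Proof.
move=> x y; rewrite !mxE eq_sym.
by case: eqP => [->|_]; [rewrite mulrCA | rewrite !mulr0].
Qed.

Lemma gibbs_unit_row_sums : unit_row_sums G.
Proof.
move=> x; under eq_bigr do rewrite -[G x _]mulr1.
by rewrite sum_gibbs_row sum_block_div_piO.
Qed.

Lemma gibbs_idem : G *m G = G.
Proof.
apply/matrixP => x y; rewrite mxE sum_gibbs_row -[RHS](sum_block_div_piO (blk x)).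
apply: eq_bigr => z /eqP zx; congr (_ * (_ / _)).
by rewrite !mxE zx.
Qed.

Lemma mxtrace_gibbs : \tr G = k%:R.
Proof.
rewrite /mxtrace (partition_big blk predT) //=.
transitivity (\sum_(i < k) (1 : R)); last by rewrite sumr_const card_ord.
apply: eq_bigr => i _; rewrite -[1](sum_block_div_piO i).
by apply: eq_bigr => x /eqP xi; rewrite mxE eqxx xi mul1r.
Qed.

Lemma mxtrace_mul_gibbs (P : 'M[R]_n) : \tr (P *m G) = \tr (proj_chain pi blk P).
Proof.
rewrite /mxtrace (partition_big blk predT) //=; apply: eq_bigr => i _.
rewrite [RHS]mxE mulr_sumr; apply: eq_bigr => x /eqP xi.
rewrite [LHS]mxE [RHS]mulr_sumr [RHS]big_mkcond; apply: eq_bigr => y _.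
rewrite [G y x]mxE xi eq_sym; case: eqP => [->|_]; last by rewrite mulr0.
by rewrite mulrCA mulrA mulrC.
Qed.

End Gibbs.

Theorem proposition4p2 (R : realFieldType) (n k : nat)
  (pi : 'I_n -> R) (P : 'M[R]_n) (blk : 'I_n -> 'I_k) (alpha : R) :
  prob_pos pi -> transition P -> reversible pi P -> partition_map blk ->
  0 <= alpha <= 1 ->
  frob2 pi (alpha *: P + (1 - alpha) *: gibbs pi blk - PiM pi) =
    2 * alpha * (1 - alpha) * \tr (proj_chain pi blk P)
    + alpha ^+ 2 * \tr (P *m P) + (1 - alpha) ^+ 2 * k%:R - 1.
Proof.
move=> [pi_gt0 pi1] [_ P1] rP blk_onto _.
have pi_neq0 x : pi x != 0 by rewrite gt_eqF.
set G := gibbs pi blk; set A := alpha *: P + (1 - alpha) *: G.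
have rA : reversible pi A by apply/reversible_lincomb/gibbs_reversible.
have A1 : unit_row_sums A.
  apply: unit_row_sums_lincomb P1 (gibbs_unit_row_sums pi_gt0 blk_onto) _.
  by rewrite addrC subrK.
rewrite (frob2_reversible pi_neq0 (reversibleB rA (reversible_PiM pi))).
rewrite (sqr_subr_PiM pi1 A1 (reversible_stationary rA A1)) raddfB /= mxtrace_PiM pi1.
rewrite /A mulmxDl !mulmxDr -!scalemxAl -!scalemxAr !scalerA (gibbs_idem pi_gt0 blk_onto).
rewrite !mxtraceD !mxtraceZ (mxtrace_mulC G P) mxtrace_mul_gibbs.
rewrite (mxtrace_gibbs pi_gt0 blk_onto).
ring.
Qed.
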